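(* Let $(T,f,(\le_h))$ and $(T',f',(\le'_h))$ be ordered merge trees and $\delta\ge0$. If there exists a monotone $\delta$-interleaving between them, then there exists a monotone $\delta$-good map $T\to T'$.
   Context: A merge tree $(T,f)$: a finite rooted tree $T$ identified with its topological realisation, with a continuous $f\colon T\to\mathbb{R}\cup\{\infty\}$ strictly increasing towards the root, $f(v)=\infty$ iff $v$ is the root; lowest leaf at height $0$. $x_1\preceq x_2$ ($x_2$ ancestor of $x_1$) iff there is an $f$-increasing path from $x_1$ to $x_2$; $\mathrm{anc}_h(x)$ is the unique ancestor of $x$ at height $h\ge f(x)$; $x^\delta:=\mathrm{anc}_{f(x)+\delta}(x)$; $\mathbb{L}_h=\{x:f(x)=h\}$. A layer-order is a family $(\le_h)_{h\ge0}$ of total orders on the $\mathbb{L}_h$ that is consistent ($h_1\le h_2$, $x_1\le_{h_1}x_2$ imply $\mathrm{anc}_{h_2}(x_1)\le_{h_2}\mathrm{anc}_{h_2}(x_2)$); $(T,f,(\le_h))$ is an ordered merge tree. A map $\alpha\colon T\to T'$ with $f'(\alpha(x))=f(x)+\delta$ for all $x$ is monotone if for all $h$ and $x_1,x_2\in\mathbb{L}_h$, $x_1\le_h x_2$ implies $\alpha(x_1)\le'_{h+\delta}\alpha(x_2)$. A $\delta$-interleaving is a pair of continuous maps $\alpha\colon T\to T'$, $\beta\colon T'\to T$ with $f'(\alpha(x))=f(x)+\delta$, $\beta(\alpha(x))=x^{2\delta}$, $f(\beta(y))=f'(y)+\delta$, $\alpha(\beta(y))=y^{2\delta}$ for all $x\in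 T,y\in T'$; it is monotone if $\alpha$ and $\beta$ are. A $\delta$-good map is a continuous map $\alpha\colon T\to T'$ with (G1) $f'(\alpha(x))=f(x)+\delta$ for all $x$; (G2) if $\alpha(x_1)\succeq\alpha(x_2)$ then $x_1^{2\delta}\succeq x_2^{2\delta}$; (G3) $|f'(y^F)-f'(y)|\le2\delta$ for all $y\in T'\setminus\mathrm{Im}(\alpha)$, where $y^F$ is the lowest ancestor of $y$ in $\mathrm{Im}(\alpha)$. A monotone $\delta$-good map is a $\delta$-good map that is monotone. *)

From HB Require Import structures.
From mathcomp Require Import all_boot all_order all_algebra.
From mathcomp Require Import boolp reals constructive_ereal.
Set Implicit Arguments. Unset Strict Implicit. Unset Printing Implicit Defensive.
Import Order.TTheory GRing.Theory Num.Theory.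
Local Open Scope ring_scope.
Local Open Scope ereal_scope.

(* A finite rooted tree on the vertex type mV, root mroot, parent map mpar
   (mpar root = root, every vertex reaches the root), heights mhv of the
   non-root vertices, strictly increasing towards the root; the root has
   height +oo. *)
Record mtree (R : realType) := MTree {
  mV : finType;
  mroot : mV;
  mpar : mV -> mV;
  mhv : mV -> R;
  mpar_root : mpar mroot = mroot;
  mreach : forall v, exists n, iter n mpar v = mroot;
  mhv_incr : forall v, v != mroot -> mpar v != mroot -> (mhv v < mhv (mpar v))%R;
  mhv_ge0 : forall v, v != mroot -> (0 <= mhv v)%R;
  mlowest : exists v, v != mroot /\ mhv v = 0%R
}.

Arguments mroot {R} m.
Arguments mpar {R} m.
Arguments mhv {R} m.

Section Realisation.
Context {R : realType} (T : mtree R).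

(* Points of the topological realisation: the root (None), or a point
   (v, t) on the half-open edge from v (included) up to its parent
   (excluded); edges into the root are rays [mhv v, +oo). *)
Definition validp (p : option (mV T * R)) : Prop :=
  match p with
  | None => True
  | Some (v, t) => v != mroot T /\ (mhv T v <= t)%R /\
                   (mpar T v = mroot T \/ (t < mhv T (mpar T v))%R)
  end.

Definition pt := {p : option (mV T * R) | validp p}.

Definition ht (x : pt) : \bar R :=
  match proj1_sig x with None => +oo | Some (_, t) => t%:E end.

Definition is_anc (x y : pt) : Prop :=
  match proj1_sig x, proj1_sig y with
  | _, None => True
  | None, Some _ => False
  | Some (v, t), Some (w, s) => (exists n, iter n (mpar T) v = w) /\ (t <= s)%R
  end.

Definition anch (h : \bar R) (x : pt) : pt :=
  match pselect (exists y, is_anc x y /\ ht y = h) with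
  | left H => proj1_sig (cid H)
  | right _ => x
  end.

Definition shift (x : pt) (d : R) : pt := anch (ht x + d%:E) x.

(* Topology of the realisation: path metric on finite points
   (d(x,y) = f(z)-f(x) + f(z)-f(y) for z the lowest common ancestor),
   and neighbourhoods {f > N} of the root. [close x y e] means d(x,y) < e. *)
Definition close (x y : pt) (e : R) : Prop :=
  exists z, is_anc x z /\ is_anc y z /\ ht z != +oo /\
    (fine (ht z) - fine (ht x) + (fine (ht z) - fine (ht y)) < e)%R.

Definition in_nbhs (x : pt) (P : pt -> Prop) : Prop :=
  match proj1_sig x with
  | None => exists N : R, forall y, N%:E < ht y -> P y
  | Some _ => exists2 eta : R, (0 < eta)%R & forall y, close x y eta -> P y
  end.

End Realisation.

Definition continuous_mt {R : realType} (T T' : mtree R) (a : pt T -> pt T') :=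
  forall x (P : pt T' -> Prop), in_nbhs (a x) P -> in_nbhs x (fun y => P (a y)).

Record omtree (R : realType) := OMTree {
  omt :> mtree R;
  ole : R -> pt omt -> pt omt -> Prop;
  ole_refl : forall h x, (0 <= h)%R -> ht x = h%:E -> ole h x x;
  ole_anti : forall h x y, (0 <= h)%R -> ht x = h%:E -> ht y = h%:E ->
               ole h x y -> ole h y x -> x = y;
  ole_trans : forall h x y z, (0 <= h)%R -> ht x = h%:E -> ht y = h%:E ->
               ht z = h%:E -> ole h x y -> ole h y z -> ole h x z;
  ole_total : forall h x y, (0 <= h)%R -> ht x = h%:E -> ht y = h%:E ->
               ole h x y \/ ole h y x;
  ole_consistent : forall h1 h2 x1 x2, (0 <= h1)%R -> (h1 <= h2)%R ->
               ht x1 = h1%:E -> ht x2 = h1%:E -> ole h1 x1 x2 ->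
               ole h2 (anch h2%:E x1) (anch h2%:E x2)
}.

Section Maps.
Context {R : realType} (T T' : omtree R).

Definition shifts_by (d : R) (a : pt T -> pt T') : Prop :=
  forall x, ht (a x) = ht x + d%:E.

Definition monotone_mt (d : R) (a : pt T -> pt T') : Prop :=
  forall h x1 x2, (0 <= h)%R -> ht x1 = h%:E -> ht x2 = h%:E ->
    ole h x1 x2 -> ole (h + d)%R (a x1) (a x2).

Definition good_map (d : R) (a : pt T -> pt T') : Prop :=
  continuous_mt a /\
  shifts_by d a /\
  (forall x1 x2, is_anc (a x2) (a x1) ->
      is_anc (shift x2 (2 * d)) (shift x1 (2 * d))) /\
  (forall y, ~ (exists x, a x = y) ->
      exists yF, [/\ is_anc y yF, (exists x, a x = yF),
                     (forall w, is_anc y w -> (exists x, a x = w) -> is_anc yF w)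
                   & `|ht yF - ht y| <= (2 * d)%:E]).

Definition monotone_good_map (d : R) (a : pt T -> pt T') : Prop :=
  good_map d a /\ monotone_mt d a.

End Maps.

Definition interleaving {R : realType} (T T' : omtree R) (d : R)
    (a : pt T -> pt T') (b : pt T' -> pt T) : Prop :=
  [/\ continuous_mt a, continuous_mt b,
      shifts_by d a /\ shifts_by d b,
      forall x, b (a x) = shift x (2 * d)
    & forall y, a (b y) = shift y (2 * d)].

Definition monotone_interleaving {R : realType} (T T' : omtree R) (d : R)
    (a : pt T -> pt T') (b : pt T' -> pt T) : Prop :=
  interleaving d a b /\ monotone_mt d a /\ monotone_mt d b.

From mathcomp Require Import all_boot all_order all_algebra.
From mathcomp Require Import boolp classical_sets reals constructive_ereal.
From mathcomp Require Import lra.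
Set Implicit Arguments. Unset Strict Implicit. Unset Printing Implicit Defensive.
Import Order.TTheory GRing.Theory Num.Theory.
Local Open Scope ring_scope.

(* The good map is the interleaving map a itself.  A continuous map that
   shifts heights by a constant preserves the ancestor relation; with
   b (a x) = x^(2 delta) this gives (G2).  For (G3), y^(2 delta) = a (b y) is
   an ancestor of y in the image of a, and the image points above y form a
   closed subset of the path from y to the root, so there is a lowest one,
   at most 2 delta above y. *)

Lemma real_induction (R : realType) (P : R -> Prop) (a b : R) :
  a <= b -> P a ->
  (forall s, a <= s < b -> P s ->
     exists2 e, 0 < e & forall t, s <= t < s + e -> t <= b -> P t) ->
  (forall s, a < s <= b -> (forall t, a <= t < s -> P t) -> P s) ->
  P b.
Proof.
move=> ab Pa up down.
pose G t := a <= t <= b /\ forall s, a <= s <= t -> P s.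
have Ga : G a.
  split; first by rewrite lexx ab.
  by move=> s /andP[s1 s2]; have -> : s = a by apply: le_anti; rewrite s1 s2.
have supG : has_sup G by split; [exists a | exists b => t [/andP[]]].
set m := sup G.
have am : a <= m by apply: sup_upper_bound.
have mb : m <= b by apply: ge_sup; [exists a | move=> t [/andP[]]].
have below_m t : a <= t < m -> P t.
  move=> /andP[ta tm].
  have [u [_ Gu] mu] : exists2 u, G u & m - (m - t) < u.
    by apply: sup_adherent; rewrite // subr_gt0.
  by apply: Gu; rewrite ta /=; lra.
have Pm : P m.
  have [<-|ltam] := eqVneq a m; first exact: Pa.
  by apply: down below_m; rewrite mb andbT lt_neqAle ltam am.
have [<-//|ltmb] := eqVneq m b.
have {}ltmb : m < b by rewrite lt_neqAle ltmb mb.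
have [e e0 Pe] := up m (ltac:(by rewrite am ltmb)) Pm.
pose t := Order.min (m + e / 2) b.
have mt : m < t by rewrite /t lt_min ltmb andbT ltrDl divr_gt0.
have te : t <= m + e / 2 by rewrite /t ge_min lexx.
have tb : t <= b by rewrite /t ge_min lexx orbT.
have : G t.
  split; first by rewrite (le_trans am (ltW mt)) tb.
  move=> s /andP[s1 s2].
  have [sm|ms] := ltP s m; first by apply: below_m; rewrite s1.
  by apply: Pe; [apply/andP; split; lra | lra].
by move/(sup_upper_bound supG); rewrite -/m leNgt mt.
Qed.

Lemma exists_gap_above (R : realType) (V : finType) (f : V -> R) (c : R) :
  exists2 e, 0 < e & forall v, c < f v -> c + e <= f v.
Proof.
suff [e e0 He] : exists2 e, 0 < e & forall v, v \in enum V -> c < f v -> c + e <= f v.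
  by exists e => // v; apply: He; rewrite mem_enum.
elim: (enum V) => [|v s [e e0 IH]]; first by exists 1.
have [cv|vc] := ltP c (f v); last first.
  exists e => // u; rewrite in_cons => /orP[/eqP ->|]; [lra | exact: IH].
exists (Order.min e (f v - c)); first by rewrite lt_min e0 subr_gt0.
move=> u; rewrite in_cons => /orP[/eqP ->|us] cu.
  by rewrite -lerBrDl ge_min lexx orbT.
by apply: le_trans (IH _ us cu); rewrite lerD2l ge_min lexx.
Qed.

Section MergeTree.
Context {R : realType} (T : mtree R).
Implicit Types (x y z p w : pt T).

Lemma pt_inj x y : proj1_sig x = proj1_sig y -> x = y.
Proof.
case: x => p hp; case: y => q hq /= E; subst q.
by rewrite (Prop_irrelevance hp hq).
Qed.

Lemma ht_fin x t : ht x = t%:E -> exists v, proj1_sig x = Some (v, t).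
Proof. by case: x => [[[v s]|] H] //= [->]; exists v. Qed.

Lemma ht_pinfty x : ht x = +oo%E -> proj1_sig x = None.
Proof. by case: x => [[[v t]|] H]. Qed.

Lemma is_anc_refl x : is_anc x x.
Proof. by case: x => [[[v t]|] H] //; rewrite /is_anc /=; split => //; exists 0%N. Qed.

Lemma is_anc_trans x y z : is_anc x y -> is_anc y z -> is_anc x z.
Proof.
case: x => [[[v t]|] Hx]; case: y => [[[w s]|] Hy]; case: z => [[[u r]|] Hz];
  rewrite /is_anc //= => -[[n Hn] l1] [[m Hm] l2]; split; last exact: le_trans l2.
by exists (m + n)%N; rewrite iterD Hn.
Qed.

Lemma is_anc_root x y : proj1_sig y = None -> is_anc x y.
Proof. by rewrite /is_anc => ->; case: (proj1_sig x) => [[]|]. Qed.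

Lemma is_anc_ht x y : is_anc x y -> (ht x <= ht y)%E.
Proof.
case: x => [[[v t]|] Hx]; case: y => [[[w s]|] Hy]; rewrite /is_anc /ht //= ?leey //.
by move=> [_]; rewrite lee_fin.
Qed.

Lemma iter_mpar_root n : iter n (mpar T) (mroot T) = mroot T.
Proof. by elim: n => //= n ->; rewrite mpar_root. Qed.

Lemma iter_mpar_hv n (u v : mV T) : iter n (mpar T) u = v -> v != mroot T ->
  u != v -> mpar T u != mroot T /\ mhv T (mpar T u) <= mhv T v.
Proof.
elim: n u => [|n IH] u; first by move=> /= ->; rewrite eqxx.
rewrite iterSr => Hn vr uv.
have pr : mpar T u != mroot T.
  by apply: contraNneq vr => pu; rewrite -Hn pu iter_mpar_root.
split => //; have [<-//|puv] := eqVneq (mpar T u) v.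
have [ppr le] := IH _ Hn vr puv.
by apply: le_trans le; apply/ltW/mhv_incr.
Qed.

Lemma is_anc_other_edge x y u h v s :
  proj1_sig x = Some (u, h) -> proj1_sig y = Some (v, s) -> is_anc x y ->
  u != v -> [/\ mpar T u != mroot T, h < mhv T (mpar T u) & mhv T (mpar T u) <= mhv T v].
Proof.
move=> Ex Ey; rewrite /is_anc Ex Ey => -[[n Hn] _] uv.
have Vx := proj2_sig x; rewrite Ex in Vx; case: Vx => [_ [_ Hx]].
have Vy := proj2_sig y; rewrite Ey in Vy; case: Vy => [vr _].
have [pr le] := iter_mpar_hv Hn vr uv.
by case: Hx => [pu|//]; rewrite pu eqxx in pr.
Qed.

Lemma is_anc_same_ht x y : is_anc x y -> ht x = ht y -> x = y.
Proof.
case Ex: (proj1_sig x) => [[u h]|]; last first.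
  by move=> _; rewrite {1}/ht Ex => /esym/ht_pinfty Ey; apply: pt_inj; rewrite Ex Ey.
case Ey: (proj1_sig y) => [[v s]|]; last by rewrite /ht Ex Ey.
rewrite /ht Ex Ey => Hxy [hs]; subst s.
apply: pt_inj; rewrite Ex Ey; have [->//|uv] := eqVneq u v.
have [_ hlt hle] := is_anc_other_edge Ex Ey Hxy uv.
have Vy := proj2_sig y; rewrite Ey in Vy; case: Vy => [_ [hv _]].
by move: (le_trans hle hv); rewrite leNgt hlt.
Qed.

Lemma is_anc_chain y p w : is_anc y p -> is_anc y w -> (ht p <= ht w)%E -> is_anc p w.
Proof.
case Ew: (proj1_sig w) => [[u' s]|]; last by move=> *; exact: is_anc_root.
case Ep: (proj1_sig p) => [[u t]|]; last by rewrite /ht Ep Ew.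
case Ey: (proj1_sig y) => [[v h]|]; last by rewrite /is_anc Ey Ep.
rewrite /is_anc /ht Ey Ep Ew /= => -[[m Hm] _] [[n Hn] _]; rewrite lee_fin => ts.
split => //; have [mn|nm] := leqP m n.
  by exists (n - m)%N; rewrite -Hm -iterD subnK.
have Hu : iter (m - n) (mpar T) u' = u by rewrite -Hn -iterD subnK // ltnW.
have [<-|uu] := eqVneq u' u; first by exists 0%N.
have Vp := proj2_sig p; rewrite Ep in Vp; case: Vp => [ur [hu _]].
have Vw := proj2_sig w; rewrite Ew in Vw; case: Vw => [_ [_ Hs]].
have [pr le] := iter_mpar_hv Hu ur uu.
case: Hs => [pu|]; first by rewrite pu eqxx in pr.
by rewrite ltNge (le_trans le (le_trans hu ts)).
Qed.

Lemma exists_valid_anc n (v : mV T) t : iter n (mpar T) v = mroot T ->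
  v != mroot T -> mhv T v <= t ->
  exists2 u, (exists k, iter k (mpar T) v = u) & validp (Some (u, t)).
Proof.
elim: n v => [|n IH] v; first by move=> /= ->; rewrite eqxx.
rewrite iterSr => Hn vr hv.
have [pr|pr] := eqVneq (mpar T v) (mroot T).
  by exists v; [exists 0%N | do 2!split => //; left].
have [lt|ge] := ltP t (mhv T (mpar T v)).
  by exists v; [exists 0%N | do 2!split => //; right].
have [u [k Hk] Vu] := IH _ Hn pr ge.
by exists u => //; exists k.+1; rewrite iterSr.
Qed.

Lemma exists_anc_at x t : (ht x <= t%:E)%E -> exists p, is_anc x p /\ ht p = t%:E.
Proof.
case: x => [[[v h]|] Vx]; rewrite /ht //= ?leye_eq // lee_fin => ht.
have [vr [hv _]] := Vx; have [n Hn] := mreach v.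
have [u [k Hk] Vu] := exists_valid_anc Hn vr (le_trans hv ht).
by exists (exist _ (Some (u, t)) Vu); split => //; split => //; exists k.
Qed.

Lemma anch_spec x h : (exists y, is_anc x y /\ ht y = h) ->
  is_anc x (anch h x) /\ ht (anch h x) = h.
Proof. by rewrite /anch; case: pselect => [H _|//]; case: (cid H). Qed.

Lemma shift_fin x v h e : proj1_sig x = Some (v, h) -> 0 <= e ->
  is_anc x (shift x e) /\ ht (shift x e) = (h + e)%:E.
Proof.
move=> Ex e0; have hx : ht x = h%:E by rewrite /ht Ex.
rewrite /shift hx; apply/anch_spec/exists_anc_at.
by rewrite hx lee_fin lerDl.
Qed.

Lemma shift_root x e : proj1_sig x = None -> shift x e = x.
Proof.
move=> Ex; have hx : ht x = +oo%E by rewrite /ht Ex.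
have [_] : is_anc x (shift x e) /\ ht (shift x e) = +oo%E.
  by rewrite /shift hx; apply: anch_spec; exists x; split => //; apply: is_anc_refl.
by move/ht_pinfty => Es; apply: pt_inj; rewrite Ex Es.
Qed.

Lemma edge_gap p v h : proj1_sig p = Some (v, h) ->
  exists2 g, 0 < g & forall w u s, is_anc p w -> proj1_sig w = Some (u, s) ->
    s < h + g -> u = v.
Proof.
move=> Ep.
pose g := if mpar T v == mroot T then 1 else mhv T (mpar T v) - h.
have g0 : 0 < g.
  rewrite /g; case: eqP => [//|/eqP pv]; rewrite subr_gt0.
  have Vp := proj2_sig p; rewrite Ep in Vp; case: Vp => [_ [_ [pr|//]]].
  by rewrite pr eqxx in pv.
exists g => // w u s Hpw Ew sg; apply/eqP; rewrite eq_sym; apply/negP => /negP vu.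
have [pr _ le] := is_anc_other_edge Ep Ew Hpw vu.
have Vw := proj2_sig w; rewrite Ew in Vw; case: Vw => [_ [hu _]].
by move: sg; rewrite /g (negbTE pr); lra.
Qed.

Definition comparable_to y z :=
  ((ht y <= ht z)%E -> is_anc y z) /\ ((ht z <= ht y)%E -> is_anc z y).

Lemma in_nbhs_comparable y : in_nbhs y (comparable_to y).
Proof.
rewrite /in_nbhs; case Ey: (proj1_sig y) => [[w h]|]; last first.
  exists 0 => z _; split; last by move=> _; apply: is_anc_root.
  by rewrite {1}/ht Ey leye_eq => /eqP/ht_pinfty; apply: is_anc_root.
have [g g0 Hg] := edge_gap Ey.
exists g => // z [c [Hyc [Hzc [/negPf cfin lt]]]].
case Ec: (proj1_sig c) => [[wc hc]|]; last by rewrite /ht Ec in cfin.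
case Ez: (proj1_sig z) => [[wz hz]|]; last by move: Hzc; rewrite /is_anc Ez Ec.
move: lt; rewrite /ht Ey Ec Ez /= => lt.
have hhc : h <= hc by move: (is_anc_ht Hyc); rewrite /ht Ey Ec lee_fin.
have hzc : hz <= hc by move: (is_anc_ht Hzc); rewrite /ht Ez Ec lee_fin.
have wcE : wc = w by apply: Hg Hyc Ec _; lra.
rewrite /comparable_to /is_anc /ht Ey Ez !lee_fin; split => hle; last first.
  by move: Hzc; rewrite /is_anc Ez Ec wcE => -[].
have [->|wzw] := eqVneq wz w; first by split => //; exists 0%N.
rewrite wcE in Ec; have [_ hlt le] := is_anc_other_edge Ez Ec Hzc wzw.
have Vy := proj2_sig y; rewrite Ey in Vy; case: Vy => [_ [hw _]].
by move: hlt; rewrite ltNge (le_trans le (le_trans hw hle)).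
Qed.

Lemma close_of_anc x y r s e : is_anc x y -> ht x = r%:E -> ht y = s%:E ->
  s - r < e -> close x y e /\ close y x e.
Proof.
move=> Hxy hx hy lt; split; exists y; rewrite hx hy /=.
- by do 2!split => //; [apply: is_anc_refl | split => //; lra].
- by split; [apply: is_anc_refl | do 2!split => //; lra].
Qed.

End MergeTree.

Section ContinuousShift.
Context {R : realType} (T T' : mtree R) (d : R) (a : pt T -> pt T').
Hypotheses (a_cont : continuous_mt a) (a_shift : forall x, ht (a x) = (ht x + d%:E)%E).

Lemma map_root x : proj1_sig x = None -> proj1_sig (a x) = None.
Proof. by move=> Ex; apply: ht_pinfty; rewrite a_shift /ht Ex. Qed.

Lemma map_ht_le x y : (ht (a x) <= ht (a y))%E = (ht x <= ht y)%E.
Proof. by rewrite !a_shift leeD2rE. Qed.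

Lemma near_comparable p v h : proj1_sig p = Some (v, h) ->
  exists2 eta, 0 < eta & forall z, close p z eta -> comparable_to (a p) (a z).
Proof. by move=> Ep; have := a_cont (in_nbhs_comparable (a p)); rewrite /in_nbhs Ep. Qed.

(* Real induction along the path from y1 up to y2: by continuity, the
   ancestors of y1 whose image lies above a y1 form an open and closed
   subset of that path. *)
Lemma map_is_anc y1 y2 : is_anc y1 y2 -> is_anc (a y1) (a y2).
Proof.
case E2: (proj1_sig y2) => [[v2 h2]|]; last by move=> _; apply/is_anc_root/map_root.
case E1: (proj1_sig y1) => [[v1 h1]|]; last by rewrite /is_anc E1 E2.
move=> H12; have h12 : h1 <= h2 by move: (is_anc_ht H12); rewrite /ht E1 E2 lee_fin.
have anc_y1 s : h1 <= s -> exists q, is_anc y1 q /\ ht q = s%:E.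
  by move=> hs; apply: exists_anc_at; rewrite /ht E1 lee_fin.
pose P s := forall p, is_anc y1 p -> ht p = s%:E -> is_anc (a y1) (a p).
suff : P h2 by apply => //; rewrite /ht E2.
apply: (real_induction h12).
- move=> p Hp hp; have <- : y1 = p by apply: (is_anc_same_ht Hp); rewrite hp /ht E1.
  exact: is_anc_refl.
- move=> s /andP[s1 _] Ps.
  have [q [Hq hq]] := anc_y1 s s1; have [v Eq] := ht_fin hq.
  have [eta eta0 Heta] := near_comparable Eq.
  exists eta => // t /andP[st ts] _ p Hp hp.
  have Hqp : is_anc q p by apply: is_anc_chain Hq Hp _; rewrite hq hp lee_fin.
  have [near_qp _] := close_of_anc (e := eta) Hqp hq hp (ltac:(lra)).
  apply: is_anc_trans (Ps q Hq hq) _; apply: (Heta p near_qp).1.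
  by rewrite map_ht_le hq hp lee_fin.
- move=> s /andP[s1 s2] Pb p Hp hp.
  have [v Ep] := ht_fin hp; have [eta eta0 Heta] := near_comparable Ep.
  pose t := Order.max h1 (s - eta / 2).
  have h1t : h1 <= t by rewrite /t le_max lexx.
  have ts : t < s by rewrite /t gt_max s1 /=; lra.
  have st : s - eta / 2 <= t by rewrite /t le_max lexx orbT.
  have [q [Hq hq]] := anc_y1 t h1t.
  have Hqp : is_anc q p by apply: is_anc_chain Hq Hp _; rewrite hq hp lee_fin ltW.
  have [_ near_pq] := close_of_anc (e := eta) Hqp hq hp (ltac:(lra)).
  apply: is_anc_trans (Pb t _ q Hq hq) _; first by rewrite h1t ts.
  by apply: (Heta q near_pq).2; rewrite map_ht_le hq hp lee_fin ltW.
Qed.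

(* Close enough to p, the preimages of the points above p all lie on a
   single edge of T, whose point at height h - d is then mapped to p. *)
Lemma image_closed_above p v h : proj1_sig p = Some (v, h) ->
  (forall e, 0 < e -> exists2 x, is_anc p (a x) & (ht (a x) < (h + e)%:E)%E) ->
  exists x, a x = p.
Proof.
move=> Ep near_p.
have [g g0 Hg] := edge_gap Ep.
have [e1 e10 He1] := exists_gap_above (mhv T) (h - d).
have [x Hpx] := near_p (Order.min g e1) (ltac:(by rewrite lt_min g0 e10)).
have mg : Order.min g e1 <= g by rewrite ge_min lexx.
have me1 : Order.min g e1 <= e1 by rewrite ge_min lexx orbT.
case Ex: (proj1_sig x) => [[u r]|]; last by rewrite a_shift /ht Ex.
have hax : ht (a x) = (r + d)%:E by rewrite a_shift /ht Ex.
rewrite hax lte_fin => hx.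
have hr : h <= r + d by move: (is_anc_ht Hpx); rewrite hax /ht Ep lee_fin.
have [w Eax] := ht_fin hax.
have wv : w = v by apply: Hg Hpx Eax _; lra.
have Vx := proj2_sig x; rewrite Ex in Vx; case: Vx => [ur [hu Hpu]].
have hu_le : mhv T u <= h - d.
  by rewrite leNgt; apply/negP => /He1; lra.
have Vxh : validp (Some (u, h - d)).
  by do 2!split => //; case: Hpu => [|lt]; [left | right; lra].
pose xh : pt T := exist _ _ Vxh.
have Hxh : is_anc xh x by rewrite /is_anc Ex /=; split; [exists 0%N | lra].
have [u' Eu'] : exists u', proj1_sig (a xh) = Some (u', h).
  by apply: ht_fin; rewrite a_shift /ht /= -EFinD subrK.
exists xh; apply: pt_inj; rewrite Ep Eu'; have [->//|uv] := eqVneq u' v.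
rewrite wv in Eax; have [_ hlt le] := is_anc_other_edge Eu' Eax (map_is_anc Hxh) uv.
have Vp := proj2_sig p; rewrite Ep in Vp; case: Vp => [_ [hv _]].
by move: hlt; rewrite ltNge (le_trans le hv).
Qed.

Lemma lowest_image_anc y vy hy t1 : proj1_sig y = Some (vy, hy) ->
  (exists x, is_anc y (a x) /\ ht (a x) = t1%:E) ->
  exists yF t0, [/\ is_anc y yF, (exists x, a x = yF),
     (forall w, is_anc y w -> (exists x, a x = w) -> is_anc yF w),
     ht yF = t0%:E & hy <= t0 <= t1].
Proof.
move=> Ey St1.
pose S t := exists x, is_anc y (a x) /\ ht (a x) = t%:E.
have lbS : lbound S hy.
  by move=> t [x [Hyx hx]]; move: (is_anc_ht Hyx); rewrite hx /ht Ey lee_fin.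
have infS : has_inf S by split; [exists t1 | exists hy].
set t0 := inf S.
have ht0 : hy <= t0 by apply: lb_le_inf => //; exists t1.
have t0_le t : S t -> t0 <= t by apply: ge_inf; exists hy.
have [p [Hyp hp]] : exists p, is_anc y p /\ ht p = t0%:E.
  by apply: exists_anc_at; rewrite /ht Ey lee_fin.
have [v Ep] := ht_fin hp.
have [x Hx] : exists x, a x = p.
  apply: (image_closed_above Ep) => e e0.
  have [t [x [Hyx hx]] lt] := inf_adherent e0 infS.
  exists x; last by rewrite hx lte_fin.
  by apply: (is_anc_chain Hyp Hyx); rewrite hp hx lee_fin; apply: t0_le; exists x.
exists p, t0; split => //; [by exists x | | by rewrite ht0 (t0_le _ St1)].
move=> w Hyw [x' Hx']; case Ew: (proj1_sig w) => [[u s]|]; last exact: is_anc_root.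
have hw : ht w = s%:E by rewrite /ht Ew.
apply: (is_anc_chain Hyp Hyw); rewrite hp hw lee_fin; apply: t0_le.
by exists x'; rewrite Hx'; split.
Qed.

End ContinuousShift.

Unset Implicit Arguments.

Theorem lemma39 (R : realType) (T T' : omtree R) (delta : R) :
  0 <= delta ->
  (exists (a : pt T -> pt T') (b : pt T' -> pt T),
      monotone_interleaving delta a b) ->
  exists a : pt T -> pt T', monotone_good_map delta a.
Proof.
move=> delta0 [a [b [[a_cont b_cont [a_shift b_shift] ba ab] [a_mono _]]]].
exists a; split => //; split => //; split => //; split.
  by move=> x1 x2 /(map_is_anc b_cont b_shift); rewrite !ba.
move=> y y_notin_im.
case Ey: (proj1_sig y) => [[vy hy]|]; last first.
  by exfalso; apply: y_notin_im; exists (b y); rewrite ab shift_root.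
have [Hy_aby hy_aby] : is_anc y (a (b y)) /\ ht (a (b y)) = (hy + 2 * delta)%:E.
  by rewrite ab; apply: (shift_fin Ey); rewrite mulr_ge0.
have [yF [t0 [HyF imF lowF hF /andP[t0_ge t0_le]]]] :=
  lowest_image_anc a_cont a_shift Ey (ex_intro _ (b y) (conj Hy_aby hy_aby)).
exists yF; split => //.
by rewrite hF /ht Ey -EFinB lee_fin ger0_norm; lra.
Qed.
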